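(* Let $\mu$ be a computable measure on $\{0,1\}^{\mathbb{N}}\times\{0,1\}^{\mathbb{N}}$, and let $\mu'$ be the push-forward of $\mu$ under the map $(A,B)\mapsto A\oplus B$. Then a pair $(X,Y)$ is $\mu$-computably random if and only if $X\oplus Y$ is $\mu'$-computably random.
   Context: $A\oplus B$ is the join $A(0)B(0)A(1)B(1)\ldots$. Write $\mu(\sigma)=\mu([\sigma])$ and $\mu(\sigma\times\tau)=\mu([\sigma]\times[\tau])$; a measure is computable if these values are uniformly computable. For a computable measure $\mu$ on $\{0,1\}^{\mathbb{N}}$, $X$ is $\mu$-computably random iff $t(X)<\infty$ for every lower semicomputable $t:\{0,1\}^{\mathbb{N}}\to[0,\infty]$ and every computable measure $\nu$ on $\{0,1\}^{\mathbb{N}}$ with $\int_{[\sigma]}t\,d\mu\le\nu(\sigma)$ for all strings $\sigma$. For a computable measure $\mu$ on the product, $(X,Y)$ is $\mu$-computably random iff $t(X,Y)<\infty$ for every lower semicomputable $t:\{0,1\}^{\mathbb{N}}\times\{0,1\}^{\mathbb{N}}\to[0,\infty]$ and every computable measure $\nu$ on the product with $\int_{[\sigma]\times[\tau]}t\,d\mu\le\nu(\sigma\times\tau)$ for all strings $\sigma,\tau$. *)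

From Stdlib Require Import Reals List Arith.
Import ListNotations.
Open Scope R_scope.

Inductive recf : Type :=
| RZero : recf
| RSucc : recf
| RProj : nat -> recf
| RComp : recf -> list recf -> recf
| RPrec : recf -> recf -> recf
| RMin  : recf -> recf.

Inductive eval : recf -> list nat -> nat -> Prop :=
| ev_zero : forall v, eval RZero v 0
| ev_succ : forall x v, eval RSucc (x :: v) (S x)
| ev_proj : forall i v, (i < length v)%nat -> eval (RProj i) v (nth i v 0%nat)
| ev_comp : forall f gs v ws y, evals gs v ws -> eval f ws y -> eval (RComp f gs) v y
| ev_prec0 : forall f g v y, eval f v y -> eval (RPrec f g) (0%nat :: v) y
| ev_precS : forall f g n v r y,
    eval (RPrec f g) (n :: v) r -> eval g (n :: r :: v) y ->
    eval (RPrec f g) (S n :: v) y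
| ev_min : forall f v n,
    eval f (n :: v) 0%nat ->
    (forall m, (m < n)%nat -> exists k, eval f (m :: v) (S k)) ->
    eval (RMin f) v n
with evals : list recf -> list nat -> list nat -> Prop :=
| evs_nil : forall v, evals [] v []
| evs_cons : forall g gs v y ys, eval g v y -> evals gs v ys -> evals (g :: gs) v (y :: ys).

Definition computable_fun (f : nat -> nat) : Prop :=
  exists c : recf, forall n, eval c [n] (f n).

(* bijective binary code of finite binary strings *)
Fixpoint code_str (s : list bool) : nat :=
  match s with
  | [] => 0%nat
  | b :: s' => S (2 * code_str s' + (if b then 1 else 0))%nat
  end.

Definition npair (x y : nat) : nat := ((x + y) * (x + y + 1) / 2 + y)%nat.

Definition Qof (p m d : nat -> nat) (n : nat) : R :=
  (INR (p n) - INR (m n)) / INR (S (d n)).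

Definition cantor := nat -> bool.

Fixpoint prefix (X : cantor) (n : nat) : list bool :=
  match n with
  | O => []
  | S k => prefix X k ++ [X k]
  end.

Definition in_cyl (s : list bool) (X : cantor) : Prop :=
  forall i, (i < length s)%nat -> nth i s false = X i.

Fixpoint strings (n : nat) : list (list bool) :=
  match n with
  | O => [[]]
  | S k => flat_map (fun s => [s ++ [false]; s ++ [true]]) (strings k)
  end.

Definition sumR {A} (l : list A) (f : A -> R) : R :=
  fold_right (fun a acc => f a + acc) 0 l.

Definition join (A B : cantor) : cantor :=
  fun n => if Nat.even n then A (Nat.div2 n) else B (Nat.div2 n).

Fixpoint evens (s : list bool) : list bool :=
  match s with
  | [] => []
  | b :: s' => b :: odds s'
  end
with odds (s : list bool) : list bool :=
  match s with
  | [] => []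
  | _ :: s' => evens s'
  end.

Inductive ereal : Type := EFin (r : R) | EInf.

Definition ele (a b : ereal) : Prop :=
  match a, b with
  | _, EInf => True
  | EInf, EFin _ => False
  | EFin x, EFin y => x <= y
  end.

Definition is_sup_seq (a : nat -> R) (e : ereal) : Prop :=
  match e with
  | EFin r => is_lub (fun x => exists n, x = a n) r
  | EInf => forall M, exists n, M < a n
  end.

(* a (probability) measure mu on {0,1}^N, via mu(s) = mu([s]) *)
Definition is_measure (mu : list bool -> R) : Prop :=
  mu [] = 1 /\
  (forall s, 0 <= mu s) /\
  (forall s, mu s = mu (s ++ [false]) + mu (s ++ [true])).

(* probability measure on the product, via mu s t = mu([s] x [t]) *)
Definition is_measure2 (mu : list bool -> list bool -> R) : Prop :=
  mu [] [] = 1 /\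
  (forall s t, 0 <= mu s t) /\
  (forall s t, mu s t = mu (s ++ [false]) t + mu (s ++ [true]) t) /\
  (forall s t, mu s t = mu s (t ++ [false]) + mu s (t ++ [true])).

Definition computable_measure (mu : list bool -> R) : Prop :=
  is_measure mu /\
  exists p m d, computable_fun p /\ computable_fun m /\ computable_fun d /\
    forall s k, Rabs (Qof p m d (npair (code_str s) k) - mu s) <= / 2 ^ k.

Definition computable_measure2 (mu : list bool -> list bool -> R) : Prop :=
  is_measure2 mu /\
  exists p m d, computable_fun p /\ computable_fun m /\ computable_fun d /\
    forall s t k,
      Rabs (Qof p m d (npair (code_str s) (npair (code_str t) k)) - mu s t) <= / 2 ^ k.

(* push-forward of mu under (A,B) |-> A (+) B, evaluated on cylinders:
   the preimage of [r] under the join map is [evens r] x [odds r]. *)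
Definition pushjoin (mu : list bool -> list bool -> R) : list bool -> R :=
  fun r => mu (evens r) (odds r).

Definition lsc (t : cantor -> ereal) : Prop :=
  (forall X, ele (EFin 0) (t X)) /\
  exists p m d, computable_fun p /\ computable_fun m /\ computable_fun d /\
    forall X, is_sup_seq (fun n => Qof p m d (code_str (prefix X n))) (t X).

Definition lsc2 (t : cantor -> cantor -> ereal) : Prop :=
  (forall X Y, ele (EFin 0) (t X Y)) /\
  exists p m d, computable_fun p /\ computable_fun m /\ computable_fun d /\
    forall X Y, is_sup_seq
      (fun n => Qof p m d (npair (code_str (prefix X n)) (code_str (prefix Y n)))) (t X Y).

(* int_le mu t s c  <->  \int_{[s]} t dmu <= c.
   The integral of a nonnegative function is the supremum of integrals of
   nonnegative step functions below it that are constant on cylinders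
   [s ++ u], |u| = n (this is the Lebesgue integral for lower semicontinuous t). *)
Definition int_le (mu : list bool -> R) (t : cantor -> ereal) (s : list bool) (c : R) : Prop :=
  forall (n : nat) (f : list bool -> R),
    (forall u, In u (strings n) ->
       0 <= f u /\ forall X, in_cyl (s ++ u) X -> ele (EFin (f u)) (t X)) ->
    sumR (strings n) (fun u => f u * mu (s ++ u)) <= c.

Definition int_le2 (mu : list bool -> list bool -> R) (t : cantor -> cantor -> ereal)
    (s s' : list bool) (c : R) : Prop :=
  forall (n : nat) (f : list bool -> list bool -> R),
    (forall u u', In u (strings n) -> In u' (strings n) ->
       0 <= f u u' /\
       forall X Y, in_cyl (s ++ u) X -> in_cyl (s' ++ u') Y -> ele (EFin (f u u')) (t X Y)) ->
    sumR (strings n) (fun u => sumR (strings n) (fun u' => f u u' * mu (s ++ u) (s' ++ u'))) <= c.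

Definition comp_random (mu : list bool -> R) (X : cantor) : Prop :=
  forall (t : cantor -> ereal) (nu : list bool -> R),
    lsc t -> computable_measure nu ->
    (forall s, int_le mu t s (nu s)) ->
    t X <> EInf.

Definition comp_random2 (mu : list bool -> list bool -> R) (X Y : cantor) : Prop :=
  forall (t : cantor -> cantor -> ereal) (nu : list bool -> list bool -> R),
    lsc2 t -> computable_measure2 nu ->
    (forall s s', int_le2 mu t s s' (nu s s')) ->
    t X Y <> EInf.

From Stdlib Require Import Reals List Arith Lia Lra FunctionalExtensionality.
Import ListNotations.

(* The join map (A, B) |-> A (+) B and its inverse Z |-> (evens Z, odds Z) are both
   computable, and mu' is the image of mu under the join.  Tests therefore transfer in
   both directions: a test t for mu' bounded by nu gives the test t o join for mu, bounded
   by the image of nu under the inverse map, and a test t2 for mu bounded by nu2 gives the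
   test t2 o (evens, odds) for mu', bounded by the image of nu2 under the join.  The
   integral bounds hold because a join cylinder of even length is exactly a rectangle
   with sides of equal length, and every cylinder and rectangle splits into finitely many
   of these; lower semicomputability and computability of the new measures reduce to
   computable translations between the codes of strings, prefixes and rectangles. *)

Section Recursive.
Local Open Scope nat_scope.

Definition recursive (n : nat) (f : list nat -> nat) : Prop :=
  exists c, forall v, length v = n -> eval c v (f v).

Definition arg (i : nat) (v : list nat) : nat := nth i v 0.

Lemma recursive_ext n f g :
  recursive n f -> (forall v, length v = n -> f v = g v) -> recursive n g.
Proof. intros [c Hc] E. exists c. intros v Hv. rewrite <- E by exact Hv. auto. Qed.

Lemma recursive_arg n i : i < n -> recursive n (arg i).
Proof. intros Hi. exists (RProj i). intros v Hv. constructor. lia. Qed.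

Lemma recursive_zero n : recursive n (fun _ => 0).
Proof. exists RZero. intros. constructor. Qed.

Lemma recursive_succ n f : recursive n f -> recursive n (fun v => S (f v)).
Proof.
  intros [c Hc]. exists (RComp RSucc [c]). intros v Hv.
  econstructor; [constructor; [apply Hc; exact Hv | constructor] | constructor].
Qed.

Lemma recursive_const n k : recursive n (fun _ => k).
Proof. induction k; [apply recursive_zero | apply recursive_succ; exact IHk]. Qed.

Lemma recursive_comp n h gs : Forall (recursive n) gs -> recursive (length gs) h ->
  recursive n (fun v => h (map (fun g => g v) gs)).
Proof.
  intros HF [ch Hh].
  assert (Hgs : exists cs, forall v, length v = n -> evals cs v (map (fun g => g v) gs)).
  { clear Hh. induction HF as [|g gs [c Hc] _ [cs Hcs]]; [exists []; constructor|].
    exists (c :: cs). intros v Hv. constructor; auto. }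
  destruct Hgs as [cs Hcs]. exists (RComp ch cs). intros v Hv.
  econstructor; [apply Hcs; exact Hv|]. apply Hh. rewrite length_map. reflexivity.
Qed.

Lemma recursive_comp1 n h f : recursive 1 h -> recursive n f ->
  recursive n (fun v => h [f v]).
Proof. intros Hh Hf. apply (recursive_comp n h [f]); auto. Qed.

Lemma recursive_comp2 n h f g : recursive 2 h -> recursive n f -> recursive n g ->
  recursive n (fun v => h [f v; g v]).
Proof. intros Hh Hf Hg. apply (recursive_comp n h [f; g]); auto. Qed.

Lemma recursive_comp3 n h f g k : recursive 3 h ->
  recursive n f -> recursive n g -> recursive n k ->
  recursive n (fun v => h [f v; g v; k v]).
Proof. intros Hh Hf Hg Hk. apply (recursive_comp n h [f; g; k]); auto. Qed.

Lemma recursive_prec n f g (h : list nat -> nat) : recursive n f -> recursive (S (S n)) g ->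
  (forall w, length w = n -> h (0 :: w) = f w) ->
  (forall k w, length w = n -> h (S k :: w) = g (k :: h (k :: w) :: w)) ->
  recursive (S n) h.
Proof.
  intros [cf Hf] [cg Hg] H0 HS. exists (RPrec cf cg).
  intros [|x w] Hv; [discriminate|]. injection Hv as Hw.
  induction x.
  - rewrite H0 by exact Hw. constructor. auto.
  - rewrite HS by exact Hw. econstructor; [exact IHx|]. apply Hg. simpl. lia.
Qed.

Ltac destruct_args :=
  let v := fresh "v" in let Hv := fresh "Hv" in
  intros v Hv; repeat (destruct v as [|? v]; simpl in Hv; try discriminate);
  unfold arg; simpl.

Lemma recursive_add n f g : recursive n f -> recursive n g -> recursive n (fun v => f v + g v).
Proof.
  apply (recursive_comp2 n (fun v => arg 0 v + arg 1 v)).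
  apply (recursive_prec 1 (arg 0) (fun v => S (arg 1 v))).
  - apply recursive_arg; lia.
  - apply recursive_succ, recursive_arg; lia.
  - destruct_args. reflexivity.
  - intros k. destruct_args. reflexivity.
Qed.

Lemma recursive_mul n f g : recursive n f -> recursive n g -> recursive n (fun v => f v * g v).
Proof.
  apply (recursive_comp2 n (fun v => arg 0 v * arg 1 v)).
  apply (recursive_prec 1 (fun _ => 0) (fun v => arg 1 v + arg 2 v)).
  - apply recursive_zero.
  - apply recursive_add; apply recursive_arg; lia.
  - destruct_args. reflexivity.
  - intros k. destruct_args. lia.
Qed.

Lemma recursive_pred n f : recursive n f -> recursive n (fun v => pred (f v)).
Proof.
  apply (recursive_comp1 n (fun v => pred (arg 0 v))).
  apply (recursive_prec 0 (fun _ => 0) (arg 0)).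
  - apply recursive_zero.
  - apply recursive_arg; lia.
  - destruct_args. reflexivity.
  - intros k. destruct_args. reflexivity.
Qed.

Lemma recursive_sub n f g : recursive n f -> recursive n g -> recursive n (fun v => f v - g v).
Proof.
  intros Hf Hg.
  assert (Hrsub : recursive 2 (fun v => arg 1 v - arg 0 v)).
  { apply (recursive_prec 1 (arg 0) (fun v => pred (arg 1 v))).
    - apply recursive_arg; lia.
    - apply recursive_pred, recursive_arg; lia.
    - destruct_args. lia.
    - intros k. destruct_args. lia. }
  exact (recursive_comp2 n _ g f Hrsub Hg Hf).
Qed.

Lemma recursive_ifz n f g h : recursive n f -> recursive n g -> recursive n h ->
  recursive n (fun v => match f v with O => g v | S _ => h v end).
Proof.
  apply (recursive_comp3 n (fun v => match arg 0 v with O => arg 1 v | S _ => arg 2 v end)).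
  apply (recursive_prec 2 (arg 0) (arg 3)).
  - apply recursive_arg; lia.
  - apply recursive_arg; lia.
  - destruct_args. reflexivity.
  - intros k. destruct_args. reflexivity.
Qed.

Lemma recursive_if_le n f g h k :
  recursive n f -> recursive n g -> recursive n h -> recursive n k ->
  recursive n (fun v => if f v <=? g v then h v else k v).
Proof.
  intros Hf Hg Hh Hk.
  eapply recursive_ext; [apply (recursive_ifz n (fun v => f v - g v) h k); auto|].
  - apply recursive_sub; auto.
  - intros v _. destruct (Nat.leb_spec (f v) (g v)).
    + replace (f v - g v) with 0 by lia. reflexivity.
    + destruct (f v - g v) eqn:E; [lia | reflexivity].
Qed.

Lemma recursive_odd n f : recursive n f -> recursive n (fun v => Nat.b2n (Nat.odd (f v))).
Proof.
  apply (recursive_comp1 n (fun v => Nat.b2n (Nat.odd (arg 0 v)))).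
  apply (recursive_prec 0 (fun _ => 0) (fun v => 1 - arg 1 v)).
  - apply recursive_zero.
  - apply recursive_sub; [apply recursive_const | apply recursive_arg; lia].
  - destruct_args. reflexivity.
  - intros k. destruct_args.
    rewrite Nat.odd_succ, <- Nat.negb_odd. destruct (Nat.odd k); reflexivity.
Qed.

Lemma recursive_div2 n f : recursive n f -> recursive n (fun v => Nat.div2 (f v)).
Proof.
  apply (recursive_comp1 n (fun v => Nat.div2 (arg 0 v))).
  apply (recursive_prec 0 (fun _ => 0) (fun v => arg 1 v + Nat.b2n (Nat.odd (arg 0 v)))).
  - apply recursive_zero.
  - apply recursive_add; [|apply recursive_odd]; apply recursive_arg; lia.
  - destruct_args. reflexivity.
  - intros k. destruct_args.
    pose proof (Nat.div2_odd (S k)) as HS. pose proof (Nat.div2_odd k) as Hk.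
    rewrite Nat.odd_succ, <- Nat.negb_odd in HS. destruct (Nat.odd k); simpl in *; lia.
Qed.

Fixpoint sum_below (n : nat) (f : nat -> nat) : nat :=
  match n with O => 0 | S k => sum_below k f + f k end.

Fixpoint prod_below (n : nat) (f : nat -> nat) : nat :=
  match n with O => 1 | S k => prod_below k f * f k end.

Lemma recursive_sum_below g : recursive 2 g ->
  recursive 2 (fun v => sum_below (arg 0 v) (fun i => g [i; arg 1 v])).
Proof.
  intros Hg.
  apply (recursive_prec 1 (fun _ => 0) (fun v => arg 1 v + g [arg 0 v; arg 2 v])).
  - apply recursive_zero.
  - apply recursive_add; [|apply recursive_comp2; auto]; apply recursive_arg; lia.
  - destruct_args. reflexivity.
  - intros k. destruct_args. reflexivity.
Qed.

Lemma recursive_prod_below g : recursive 2 g ->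
  recursive 2 (fun v => prod_below (arg 0 v) (fun i => g [i; arg 1 v])).
Proof.
  intros Hg.
  apply (recursive_prec 1 (fun _ => 1) (fun v => arg 1 v * g [arg 0 v; arg 2 v])).
  - apply recursive_const.
  - apply recursive_mul; [|apply recursive_comp2; auto]; apply recursive_arg; lia.
  - destruct_args. reflexivity.
  - intros k. destruct_args. reflexivity.
Qed.

Lemma recursive_iter g : recursive 1 g ->
  recursive 2 (fun v => Nat.iter (arg 0 v) (fun x => g [x]) (arg 1 v)).
Proof.
  intros Hg.
  apply (recursive_prec 1 (arg 0) (fun v => g [arg 1 v])).
  - apply recursive_arg; lia.
  - apply recursive_comp1; auto; apply recursive_arg; lia.
  - destruct_args. reflexivity.
  - intros k. destruct_args. reflexivity.
Qed.

End Recursive.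

Section Computable.
Local Open Scope nat_scope.

Lemma computable_fun_recursive f : computable_fun f <-> recursive 1 (fun v => f (arg 0 v)).
Proof.
  split; intros [c Hc]; exists c.
  - intros [|x [|]] Hv; try discriminate. apply Hc.
  - intros n. apply (Hc [n]). reflexivity.
Qed.

Lemma computable_fun_ext f g : computable_fun f -> (forall z, f z = g z) -> computable_fun g.
Proof. intros [c Hc] E. exists c. intros n. rewrite <- E. apply Hc. Qed.

Ltac by_recursive lem :=
  intros; apply computable_fun_recursive; apply lem;
  apply computable_fun_recursive; assumption.

Lemma computable_id : computable_fun (fun z => z).
Proof. apply computable_fun_recursive, recursive_arg. lia. Qed.

Lemma computable_const k : computable_fun (fun _ => k).
Proof. apply computable_fun_recursive, recursive_const. Qed.

Lemma computable_succ f : computable_fun f -> computable_fun (fun z => S (f z)).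
Proof. by_recursive recursive_succ. Qed.

Lemma computable_pred f : computable_fun f -> computable_fun (fun z => pred (f z)).
Proof. by_recursive recursive_pred. Qed.

Lemma computable_div2 f : computable_fun f -> computable_fun (fun z => Nat.div2 (f z)).
Proof. by_recursive recursive_div2. Qed.

Lemma computable_odd f : computable_fun f -> computable_fun (fun z => Nat.b2n (Nat.odd (f z))).
Proof. by_recursive recursive_odd. Qed.

Lemma computable_add f g : computable_fun f -> computable_fun g ->
  computable_fun (fun z => f z + g z).
Proof. by_recursive recursive_add. Qed.

Lemma computable_mul f g : computable_fun f -> computable_fun g ->
  computable_fun (fun z => f z * g z).
Proof. by_recursive recursive_mul. Qed.

Lemma computable_sub f g : computable_fun f -> computable_fun g ->
  computable_fun (fun z => f z - g z).
Proof. by_recursive recursive_sub. Qed.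

Lemma computable_if_le f g h k :
  computable_fun f -> computable_fun g -> computable_fun h -> computable_fun k ->
  computable_fun (fun z => if f z <=? g z then h z else k z).
Proof. by_recursive recursive_if_le. Qed.

Lemma computable_if_lt f g h k :
  computable_fun f -> computable_fun g -> computable_fun h -> computable_fun k ->
  computable_fun (fun z => if f z <? g z then h z else k z).
Proof. intros. apply (computable_if_le (fun z => S (f z))); auto. apply computable_succ; auto. Qed.

Lemma computable_if_eq f g h k :
  computable_fun f -> computable_fun g -> computable_fun h -> computable_fun k ->
  computable_fun (fun z => if f z =? g z then h z else k z).
Proof.
  intros. eapply computable_fun_ext.
  - apply (computable_if_le f g (fun z => if g z <=? f z then h z else k z) k);
      auto using computable_if_le.
  - intros z; cbv beta. destruct (Nat.leb_spec (f z) (g z)), (Nat.leb_spec (g z) (f z)),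
      (Nat.eqb_spec (f z) (g z)); auto; lia.
Qed.

Lemma computable_if_even f g h :
  computable_fun f -> computable_fun g -> computable_fun h ->
  computable_fun (fun z => if Nat.even (f z) then g z else h z).
Proof.
  intros. eapply computable_fun_ext.
  - apply (computable_if_eq (fun z => Nat.b2n (Nat.odd (f z))) (fun _ => 0) g h);
      auto using computable_odd, computable_const.
  - intros z; cbv beta. rewrite <- Nat.negb_even. destruct (Nat.even (f z)); reflexivity.
Qed.

Lemma computable_comp g f : computable_fun g -> computable_fun f ->
  computable_fun (fun z => g (f z)).
Proof. by_recursive (recursive_comp1 1 (fun v => g (arg 0 v))). Qed.

Lemma computable_iter g f x : computable_fun g -> computable_fun f -> computable_fun x ->
  computable_fun (fun z => Nat.iter (f z) g (x z)).
Proof.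
  intros Hg Hf Hx. apply computable_fun_recursive in Hg, Hf, Hx.
  apply computable_fun_recursive, (recursive_comp2 1 _ _ _ (recursive_iter _ Hg) Hf Hx).
Qed.

Lemma computable_pow2 f : computable_fun f -> computable_fun (fun z => 2 ^ f z).
Proof.
  intros Hf. eapply computable_fun_ext.
  - apply (computable_iter (fun x => x + x) f (fun _ => 1));
      auto using computable_add, computable_id, computable_const.
  - intros z; cbv beta. induction (f z) as [|k IH]; [reflexivity|]. simpl. rewrite IH. lia.
Qed.

Lemma sum_below_ext n f g : (forall i, i < n -> f i = g i) -> sum_below n f = sum_below n g.
Proof. induction n; simpl; intros; auto. rewrite IHn, H; auto. Qed.

Lemma prod_below_ext n f g : (forall i, i < n -> f i = g i) -> prod_below n f = prod_below n g.
Proof. induction n; simpl; intros; auto. rewrite IHn, H; auto. Qed.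

Lemma sum_below_indicator n m :
  sum_below n (fun i => if S i <=? m then 1 else 0) = Nat.min n m.
Proof.
  induction n; cbn [sum_below]; auto. rewrite IHn.
  destruct (Nat.leb_spec (S n) m); lia.
Qed.

Definition tri (n : nat) : nat := Nat.div2 (n * S n).

Lemma tri_S n : tri (S n) = tri n + S n.
Proof.
  unfold tri. rewrite !Nat.div2_div.
  replace (S n * S (S n)) with (n * S n + S n * 2) by lia.
  rewrite Nat.div_add by lia. reflexivity.
Qed.

Lemma tri_le_mono a b : a <= b -> tri a <= tri b.
Proof. induction 1; auto. rewrite tri_S. lia. Qed.

Lemma le_tri n : n <= tri n.
Proof. induction n; [unfold tri; simpl; lia|]. rewrite tri_S. lia. Qed.

Lemma npair_tri x y : npair x y = tri (x + y) + y.
Proof. unfold npair, tri. rewrite Nat.div2_div. do 2 f_equal. lia. Qed.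

(* the diagonal x + y of z = npair x y is the number of i with tri (S i) <= z *)
Definition npair_diag (z : nat) : nat := sum_below z (fun i => if tri (S i) <=? z then 1 else 0).
Definition unpair2 (z : nat) : nat := z - tri (npair_diag z).
Definition unpair1 (z : nat) : nat := npair_diag z - unpair2 z.

Lemma npair_diag_npair x y : npair_diag (npair x y) = x + y.
Proof.
  unfold npair_diag. rewrite npair_tri.
  rewrite (sum_below_ext _ _ (fun i => if S i <=? x + y then 1 else 0)).
  - rewrite sum_below_indicator. pose proof (le_tri (x + y)). lia.
  - intros i _. destruct (Nat.leb_spec (S i) (x + y)) as [Hi|Hi].
    + pose proof (tri_le_mono _ _ Hi). replace (tri (S i) <=? tri (x + y) + y) with true; auto.
      symmetry. apply Nat.leb_le. lia.
    + pose proof (tri_le_mono (S (x + y)) (S i) Hi) as Hm. rewrite tri_S in Hm.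
      replace (tri (S i) <=? tri (x + y) + y) with false; auto. symmetry. apply Nat.leb_gt. lia.
Qed.

Lemma unpair2_npair x y : unpair2 (npair x y) = y.
Proof. unfold unpair2. rewrite npair_diag_npair, npair_tri. lia. Qed.

Lemma unpair1_npair x y : unpair1 (npair x y) = x.
Proof. unfold unpair1. rewrite npair_diag_npair, unpair2_npair. lia. Qed.

Lemma recursive_tri n f : recursive n f -> recursive n (fun v => tri (f v)).
Proof. intros. apply recursive_div2, recursive_mul, recursive_succ; assumption. Qed.

Lemma recursive_npair n f g : recursive n f -> recursive n g ->
  recursive n (fun v => npair (f v) (g v)).
Proof.
  intros Hf Hg. eapply recursive_ext.
  - apply (recursive_add n (fun v => tri (f v + g v)) g); auto using recursive_tri, recursive_add.
  - intros v _. rewrite npair_tri. reflexivity.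
Qed.

Lemma computable_npair f g : computable_fun f -> computable_fun g ->
  computable_fun (fun z => npair (f z) (g z)).
Proof. by_recursive recursive_npair. Qed.

Lemma computable_tri f : computable_fun f -> computable_fun (fun z => tri (f z)).
Proof. by_recursive recursive_tri. Qed.

Lemma computable_npair_diag : computable_fun npair_diag.
Proof.
  apply computable_fun_recursive.
  assert (Hind : recursive 2 (fun v => if tri (S (arg 0 v)) <=? arg 1 v then 1 else 0)).
  { apply recursive_if_le; try apply recursive_const;
      [apply recursive_tri, recursive_succ|]; apply recursive_arg; lia. }
  apply (recursive_comp2 1 _ _ _ (recursive_sum_below _ Hind)); apply recursive_arg; lia.
Qed.

Lemma computable_unpair2 f : computable_fun f -> computable_fun (fun z => unpair2 (f z)).
Proof.
  intros. apply (computable_comp unpair2); auto.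
  apply computable_sub; [apply computable_id | apply computable_tri, computable_npair_diag].
Qed.

Lemma computable_unpair1 f : computable_fun f -> computable_fun (fun z => unpair1 (f z)).
Proof.
  intros. apply (computable_comp unpair1); auto.
  apply computable_sub; [apply computable_npair_diag | apply computable_unpair2, computable_id].
Qed.

Lemma recursive_of_unpaired (E : nat -> nat -> nat) :
  computable_fun (fun w => E (unpair1 w) (unpair2 w)) ->
  recursive 2 (fun v => E (arg 0 v) (arg 1 v)).
Proof.
  intros HE. apply computable_fun_recursive in HE. eapply recursive_ext.
  - apply (recursive_comp1 2 _ (fun v => npair (arg 0 v) (arg 1 v)) HE).
    apply recursive_npair; apply recursive_arg; lia.
  - intros [|a [|b []]] Hv; try discriminate. unfold arg; simpl.
    rewrite unpair1_npair, unpair2_npair. reflexivity.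
Qed.

Lemma computable_sum_below (E : nat -> nat -> nat) N :
  computable_fun (fun w => E (unpair1 w) (unpair2 w)) -> computable_fun N ->
  computable_fun (fun z => sum_below (N z) (fun i => E i z)).
Proof.
  intros HE HN. apply recursive_of_unpaired, recursive_sum_below in HE.
  apply computable_fun_recursive in HN. apply computable_fun_recursive.
  apply (recursive_comp2 1 _ _ _ HE HN). apply recursive_arg; lia.
Qed.

Lemma computable_prod_below (E : nat -> nat -> nat) N :
  computable_fun (fun w => E (unpair1 w) (unpair2 w)) -> computable_fun N ->
  computable_fun (fun z => prod_below (N z) (fun i => E i z)).
Proof.
  intros HE HN. apply recursive_of_unpaired, recursive_prod_below in HE.
  apply computable_fun_recursive in HN. apply computable_fun_recursive.
  apply (recursive_comp2 1 _ _ _ HE HN). apply recursive_arg; lia.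
Qed.

End Computable.

Section StringCodes.
Local Open Scope nat_scope.

(* inverse operations of [code_str]: [code_str (b :: s) = S (2 * code_str s + b)] *)
Definition code_tail (c : nat) : nat := Nat.div2 (pred c).
Definition code_drop (i c : nat) : nat := Nat.iter i code_tail c.
Definition code_bit (i c : nat) : nat := Nat.b2n (Nat.odd (pred (code_drop i c))).
Definition code_length (c : nat) : nat :=
  sum_below c (fun i => if code_drop i c =? 0 then 0 else 1).

Lemma code_tail_cons b l : code_tail (code_str (b :: l)) = code_str l.
Proof.
  unfold code_tail. cbn [code_str pred]. destruct b.
  - replace (2 * code_str l + 1) with (S (2 * code_str l)) by lia. apply Nat.div2_succ_double.
  - rewrite Nat.add_0_r. apply Nat.div2_double.
Qed.

Lemma code_drop_code i l : code_drop i (code_str l) = code_str (skipn i l).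
Proof.
  revert l. induction i; intros l; auto.
  unfold code_drop in *. rewrite Nat.iter_succ_r. destruct l as [|b l].
  - specialize (IHi []). cbn [code_str skipn] in *. destruct i; exact IHi.
  - rewrite code_tail_cons. apply IHi.
Qed.

Lemma code_bit_code i l : i < length l -> code_bit i (code_str l) = Nat.b2n (nth i l false).
Proof.
  intros H. unfold code_bit. rewrite code_drop_code.
  assert (E : nth i l false = hd false (skipn i l)).
  { revert i H. induction l; intros i H; simpl in H; [lia|]. destruct i; simpl; auto. apply IHl. lia. }
  rewrite E. destruct (skipn i l) as [|b l'] eqn:Es.
  - apply (f_equal (@length bool)) in Es. rewrite length_skipn in Es. simpl in Es. lia.
  - cbn [code_str pred hd]. rewrite Nat.odd_add, Nat.odd_mul. destruct b; reflexivity.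
Qed.

Lemma length_le_code_str l : length l <= code_str l.
Proof. induction l; simpl; lia. Qed.

Lemma code_length_code l : code_length (code_str l) = length l.
Proof.
  unfold code_length.
  rewrite (sum_below_ext _ _ (fun i => if S i <=? length l then 1 else 0)).
  - rewrite sum_below_indicator. pose proof (length_le_code_str l). lia.
  - intros i _. rewrite code_drop_code. destruct (Nat.leb_spec (S i) (length l)).
    + destruct (skipn i l) eqn:E; [|reflexivity].
      apply (f_equal (@length bool)) in E. rewrite length_skipn in E. simpl in E. lia.
    + rewrite skipn_all2 by lia. reflexivity.
Qed.

Lemma sum_below_shift n f : sum_below (S n) f = f 0 + sum_below n (fun i => f (S i)).
Proof. induction n; cbn [sum_below] in *; [lia|]. rewrite IHn. lia. Qed.

Lemma sum_below_mul_l n k f : k * sum_below n f = sum_below n (fun i => k * f i).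
Proof. induction n; simpl; lia. Qed.

Lemma code_str_sum l :
  code_str l = sum_below (length l) (fun p => 2 ^ p * (1 + Nat.b2n (nth p l false))).
Proof.
  induction l as [|b l IH]; auto.
  cbn [length]. rewrite sum_below_shift. cbn [nth].
  rewrite (sum_below_ext _ _ (fun i => 2 * (2 ^ i * (1 + Nat.b2n (nth i l false))))).
  - rewrite <- sum_below_mul_l, <- IH. simpl. destruct b; simpl; lia.
  - intros. simpl. lia.
Qed.

Lemma length_prefix X n : length (prefix X n) = n.
Proof. induction n; simpl; auto. rewrite length_app, IHn. simpl. lia. Qed.

Lemma nth_prefix X n i : i < n -> nth i (prefix X n) false = X i.
Proof.
  induction n; intros H; [lia|]. simpl.
  destruct (Nat.lt_ge_cases i n).
  - rewrite app_nth1 by (rewrite length_prefix; auto). auto.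
  - assert (i = n) by lia. subst. rewrite app_nth2; rewrite length_prefix; auto.
    rewrite Nat.sub_diag. reflexivity.
Qed.

Lemma code_prefix X n :
  code_str (prefix X n) = sum_below n (fun p => 2 ^ p * (1 + Nat.b2n (X p))).
Proof.
  rewrite code_str_sum, length_prefix. apply sum_below_ext. intros. rewrite nth_prefix; auto.
Qed.

Lemma computable_code_drop f g : computable_fun f -> computable_fun g ->
  computable_fun (fun z => code_drop (f z) (g z)).
Proof.
  intros. apply computable_iter; auto.
  apply computable_div2, computable_pred, computable_id.
Qed.

Lemma computable_code_bit f g : computable_fun f -> computable_fun g ->
  computable_fun (fun z => code_bit (f z) (g z)).
Proof. intros. apply computable_odd, computable_pred, computable_code_drop; auto. Qed.

Lemma computable_code_length f : computable_fun f -> computable_fun (fun z => code_length (f z)).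
Proof.
  intros Hf. apply (computable_comp code_length); auto.
  apply computable_sum_below; [|apply computable_id].
  apply computable_if_eq; auto using computable_const.
  apply computable_code_drop; [apply computable_unpair1 | apply computable_unpair2]; apply computable_id.
Qed.

End StringCodes.

Lemma sumR_app {A} l1 l2 (f : A -> R) : sumR (l1 ++ l2) f = sumR l1 f + sumR l2 f.
Proof. induction l1; simpl; [ring|]. unfold sumR in *. simpl. rewrite IHl1. ring. Qed.

Lemma sumR_ext {A} l (f g : A -> R) : (forall a, In a l -> f a = g a) -> sumR l f = sumR l g.
Proof.
  induction l; intros H; [reflexivity|]. unfold sumR in *; simpl.
  rewrite H, IHl; simpl; auto. intros; apply H; simpl; auto.
Qed.

Lemma sumR_plus {A} l (f g : A -> R) : sumR l (fun a => f a + g a) = sumR l f + sumR l g.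
Proof. induction l; unfold sumR in *; simpl; [ring|]. rewrite IHl. ring. Qed.

Lemma sumR_swap {A B} (l1 : list A) (l2 : list B) F :
  sumR l1 (fun a => sumR l2 (fun b => F a b)) = sumR l2 (fun b => sumR l1 (fun a => F a b)).
Proof.
  induction l1 as [|a l1 IH]; simpl.
  - unfold sumR. induction l2; simpl; auto. rewrite <- IHl2. ring.
  - change (sumR (a :: l1) (fun a0 => sumR l2 (fun b => F a0 b))) with
      (sumR l2 (fun b => F a b) + sumR l1 (fun a0 => sumR l2 (fun b => F a0 b))).
    rewrite IH, <- sumR_plus. reflexivity.
Qed.

Lemma sumR_le {A} l (f g : A -> R) : (forall a, In a l -> f a <= g a) -> sumR l f <= sumR l g.
Proof.
  induction l; intros H; unfold sumR in *; simpl; [lra|].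
  apply Rplus_le_compat; [apply H; left; reflexivity|].
  apply IHl. intros; apply H; right; assumption.
Qed.

Lemma sumR_nonneg {A} l (f : A -> R) : (forall a, In a l -> 0 <= f a) -> 0 <= sumR l f.
Proof.
  induction l; intros H; unfold sumR in *; simpl; [lra|].
  apply Rplus_le_le_0_compat; [apply H; left; reflexivity|].
  apply IHl. intros; apply H; right; assumption.
Qed.

Lemma sumR_flat_map {A B} (g : A -> list B) l f :
  sumR (flat_map g l) f = sumR l (fun a => sumR (g a) f).
Proof. induction l; simpl; auto. rewrite sumR_app, IHl. reflexivity. Qed.

Lemma sumR_map {A B} (g : A -> B) l f : sumR (map g l) f = sumR l (fun a => f (g a)).
Proof. induction l; simpl; auto. unfold sumR in *; simpl; rewrite IHl; auto. Qed.

Lemma sumR_strings_snoc n F :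
  sumR (strings (S n)) F = sumR (strings n) (fun s => F (s ++ [false]) + F (s ++ [true])).
Proof. simpl. rewrite sumR_flat_map. apply sumR_ext. intros. unfold sumR; simpl. ring. Qed.

Lemma sumR_strings_cons n F :
  sumR (strings (S n)) F =
  sumR (strings n) (fun s => F (false :: s)) + sumR (strings n) (fun s => F (true :: s)).
Proof.
  revert F. induction n; intros F.
  - unfold sumR; simpl. ring.
  - rewrite sumR_strings_snoc, IHn, !sumR_strings_snoc. reflexivity.
Qed.

Lemma length_In_strings n u : In u (strings n) -> length u = n.
Proof.
  revert u; induction n; intros u H; simpl in H.
  - destruct H as [<-|[]]; auto.
  - apply in_flat_map in H. destruct H as [s [Hs Hu]]. simpl in Hu.
    destruct Hu as [<-|[<-|[]]]; rewrite length_app, (IHn s Hs); simpl; lia.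
Qed.

Lemma In_strings n u : length u = n -> In u (strings n).
Proof.
  intros <-. induction u using rev_ind; simpl; auto.
  rewrite length_app, Nat.add_1_r. simpl.
  apply in_flat_map. exists u. split; auto. destruct x; simpl; auto.
Qed.

Section EvenOddSplit.
Local Open Scope nat_scope.

Lemma double_lt_of_lt_div2_succ i n : i < Nat.div2 (S n) -> 2 * i < n.
Proof.
  intros H. pose proof (Nat.div2_odd (S n)) as E. destruct (Nat.odd (S n)) eqn:Eo; simpl in *; [lia|].
  rewrite Nat.odd_succ in Eo. assert (2 * i <> n) by (intros <-; rewrite Nat.even_even in Eo; discriminate).
  lia.
Qed.

Lemma succ_double_lt_of_lt_div2 i n : i < Nat.div2 n -> S (2 * i) < n.
Proof. intros H. pose proof (Nat.div2_odd n). destruct (Nat.odd n); simpl in *; lia. Qed.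

Fixpoint interleave (a b : list bool) : list bool :=
  match a, b with
  | x :: a', y :: b' => x :: y :: interleave a' b'
  | _, _ => []
  end.

Lemma evens_odds_app u w :
  evens (u ++ w) = evens u ++ (if Nat.even (length u) then evens w else odds w) /\
  odds (u ++ w) = odds u ++ (if Nat.even (length u) then odds w else evens w).
Proof.
  induction u as [|b u [IH1 IH2]]; [simpl; auto|].
  cbn [app evens odds length]. rewrite IH1, IH2, Nat.even_succ, <- Nat.negb_even.
  destruct (Nat.even (length u)); simpl; auto.
Qed.

Lemma evens_app u w : Nat.even (length u) = true -> evens (u ++ w) = evens u ++ evens w.
Proof. intros H. rewrite (proj1 (evens_odds_app u w)), H. reflexivity. Qed.

Lemma odds_app u w : Nat.even (length u) = true -> odds (u ++ w) = odds u ++ odds w.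
Proof. intros H. rewrite (proj2 (evens_odds_app u w)), H. reflexivity. Qed.

Lemma length_evens_odds u :
  length (evens u) = Nat.div2 (S (length u)) /\ length (odds u) = Nat.div2 (length u).
Proof. induction u as [|b u [H1 H2]]; simpl; [split; reflexivity|]. rewrite H1, H2. auto. Qed.

Lemma length_evens_odds_double u n : length u = 2 * n ->
  length (evens u) = n /\ length (odds u) = n.
Proof.
  intros H. destruct (length_evens_odds u) as [L1 L2]. rewrite L1, L2, H.
  rewrite Nat.div2_succ_double, Nat.div2_double. auto.
Qed.

Lemma nth_evens u i : nth i (evens u) false = nth (2 * i) u false
with nth_odds u i : nth i (odds u) false = nth (S (2 * i)) u false.
Proof.
  - destruct u as [|b u]; [destruct i; reflexivity|]. destruct i; [reflexivity|].
    simpl. rewrite nth_odds. f_equal. lia.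
  - destruct u as [|b u]; [destruct i; reflexivity|]. simpl. rewrite nth_evens. reflexivity.
Qed.

Lemma length_evens_eq_odds u : Nat.even (length u) = true -> length (evens u) = length (odds u).
Proof.
  intros H. apply Nat.even_spec in H as [n Hn].
  destruct (length_evens_odds_double u n Hn). congruence.
Qed.

Lemma evens_interleave a b : length a = length b -> evens (interleave a b) = a
with odds_interleave a b : length a = length b -> odds (interleave a b) = b.
Proof.
  - destruct a as [|x a], b as [|y b]; simpl; intros H; try discriminate; auto.
    rewrite evens_interleave by lia. reflexivity.
  - destruct a as [|x a], b as [|y b]; simpl; intros H; try discriminate; auto.
    rewrite odds_interleave by lia. reflexivity.
Qed.

Lemma length_interleave a b : length a = length b -> length (interleave a b) = 2 * length a.
Proof.
  revert b; induction a as [|x a IH]; intros [|y b] H; simpl in *; try discriminate; auto.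
  rewrite IH; lia.
Qed.

Lemma even_length_interleave a b : length a = length b ->
  Nat.even (length (interleave a b)) = true.
Proof. intros H. rewrite length_interleave by exact H. apply Nat.even_even. Qed.

Lemma interleave_evens_odds u : Nat.even (length u) = true -> interleave (evens u) (odds u) = u.
Proof.
  intros H. remember (length u) as n eqn:En. revert u En H.
  induction n as [n IH] using lt_wf_ind; intros u En H.
  destruct u as [|x [|y u]]; simpl in *; subst; try discriminate; auto.
  f_equal. f_equal. apply (IH (length u)); auto.
Qed.

Lemma interleave_app p q a b : length p = length q ->
  interleave (p ++ a) (q ++ b) = interleave p q ++ interleave a b.
Proof.
  revert q; induction p as [|x p IH]; intros [|y q] H; simpl in *; try discriminate; auto.
  rewrite IH; auto.
Qed.

Lemma nth_interleave a b q : length a = length b ->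
  nth q (interleave a b) false =
  if Nat.even q then nth (Nat.div2 q) a false else nth (Nat.div2 q) b false.
Proof.
  intros HL. destruct (Nat.Even_or_Odd q) as [[u ->]|[u ->]].
  - rewrite Nat.even_even, Nat.div2_double, <- nth_evens, evens_interleave; auto.
  - rewrite Nat.even_odd, Nat.add_1_r, Nat.div2_succ_double, <- nth_odds, odds_interleave; auto.
Qed.

Definition evens_seq (Z : cantor) : cantor := fun n => Z (2 * n).
Definition odds_seq (Z : cantor) : cantor := fun n => Z (S (2 * n)).

Lemma join_evens_odds_seq Z : join (evens_seq Z) (odds_seq Z) = Z.
Proof.
  apply functional_extensionality. intros n. unfold join, evens_seq, odds_seq.
  pose proof (Nat.div2_odd n) as H. rewrite <- Nat.negb_even in H.
  destruct (Nat.even n); simpl in H; f_equal; lia.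
Qed.

Lemma evens_seq_join X Y : evens_seq (join X Y) = X.
Proof.
  apply functional_extensionality. intros n. unfold join, evens_seq.
  rewrite Nat.even_even, Nat.div2_double. reflexivity.
Qed.

Lemma odds_seq_join X Y : odds_seq (join X Y) = Y.
Proof.
  apply functional_extensionality. intros n. unfold join, odds_seq.
  rewrite <- Nat.add_1_r, Nat.even_odd, Nat.add_1_r, Nat.div2_succ_double. reflexivity.
Qed.

Lemma in_cyl_app_l l1 l2 X : in_cyl (l1 ++ l2) X -> in_cyl l1 X.
Proof. intros H i Hi. rewrite <- H by (rewrite length_app; lia). rewrite app_nth1; auto. Qed.

Lemma in_cyl_evens w Z : in_cyl w Z -> in_cyl (evens w) (evens_seq Z).
Proof.
  intros H i Hi. rewrite (proj1 (length_evens_odds w)) in Hi.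
  rewrite nth_evens. apply H, double_lt_of_lt_div2_succ, Hi.
Qed.

Lemma in_cyl_odds w Z : in_cyl w Z -> in_cyl (odds w) (odds_seq Z).
Proof.
  intros H i Hi. rewrite (proj2 (length_evens_odds w)) in Hi.
  rewrite nth_odds. apply H, succ_double_lt_of_lt_div2, Hi.
Qed.

Lemma in_cyl_interleave p q X Y : length p = length q -> in_cyl p X -> in_cyl q Y ->
  in_cyl (interleave p q) (join X Y).
Proof.
  intros HL HX HY i Hi. rewrite length_interleave in Hi by exact HL.
  rewrite nth_interleave by exact HL. unfold join.
  pose proof (Nat.div2_odd i) as E. rewrite <- Nat.negb_even in E.
  destruct (Nat.even i); simpl in E; [apply HX | apply HY]; lia.
Qed.

End EvenOddSplit.

Lemma sumR_strings_double_snoc n F : sumR (strings (S (S n))) F =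
  sumR (strings n) (fun s => (F (s ++ [false; false]) + F (s ++ [false; true])) +
                             (F (s ++ [true; false]) + F (s ++ [true; true]))).
Proof.
  rewrite !sumR_strings_snoc. apply sumR_ext. intros. rewrite <- !app_assoc. reflexivity.
Qed.

Lemma sumR_strings_evens_odds n G :
  sumR (strings (2 * n)) (fun u => G (evens u) (odds u)) =
  sumR (strings n) (fun a => sumR (strings n) (fun b => G a b)).
Proof.
  revert G. induction n; intros G.
  - unfold sumR; simpl. ring.
  - replace (2 * S n)%nat with (S (S (2 * n))) by lia.
    set (G' a b := (G (a ++ [false]) (b ++ [false]) + G (a ++ [false]) (b ++ [true])) +
                   (G (a ++ [true]) (b ++ [false]) + G (a ++ [true]) (b ++ [true]))).
    rewrite sumR_strings_double_snoc, (sumR_ext _ _ (fun u => G' (evens u) (odds u))).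
    + rewrite IHn, sumR_strings_snoc. apply sumR_ext. intros a _.
      rewrite !sumR_strings_snoc, <- sumR_plus. apply sumR_ext. intros. unfold G'. ring.
    + intros s Hs. apply length_In_strings in Hs.
      assert (He : Nat.even (length s) = true) by (rewrite Hs; apply Nat.even_even).
      rewrite !(evens_app s [_; _]), !(odds_app s [_; _]) by exact He. reflexivity.
Qed.

Lemma length_removelast {A} (l : list A) : length (removelast l) = pred (length l).
Proof. rewrite removelast_firstn_len, length_firstn. lia. Qed.

Lemma In_strings_removelast_cons n b u : In u (strings n) -> In (removelast (b :: u)) (strings n).
Proof. intros Hu. apply In_strings. rewrite length_removelast. apply length_In_strings, Hu. Qed.

Lemma in_cyl_removelast s u X : in_cyl (s ++ u) X -> in_cyl (s ++ removelast u) X.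
Proof.
  destruct (list_eq_dec Bool.bool_dec u []) as [->|Hu]; [auto|].
  rewrite (app_removelast_last false Hu) at 1. rewrite app_assoc. apply in_cyl_app_l.
Qed.

(* refining a step function from depth [n] to depth [n + 1] does not change its integral *)
Lemma sumR_refine n (F : list bool -> list bool -> R) :
  (forall a x, F a x = F a (x ++ [false]) + F a (x ++ [true])) ->
  sumR (strings n) (fun a => F a a) = sumR (strings (S n)) (fun a => F (removelast a) a).
Proof.
  intros HF. rewrite sumR_strings_snoc. apply sumR_ext. intros a _.
  rewrite !removelast_last. apply HF.
Qed.

Lemma int_le_split m t r c0 c1 : is_measure m ->
  int_le m t (r ++ [false]) c0 -> int_le m t (r ++ [true]) c1 -> int_le m t r (c0 + c1).
Proof.
  intros [_ [_ Hadd]] H0 H1 n f Hf.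
  assert (Hb : forall b c, int_le m t (r ++ [b]) c ->
    sumR (strings n) (fun u => f (removelast (b :: u)) * m (r ++ b :: u)) <= c).
  { intros b c Hc.
    rewrite (sumR_ext _ _ (fun u => f (removelast (b :: u)) * m ((r ++ [b]) ++ u)))
      by (intros; rewrite <- app_assoc; reflexivity).
    apply Hc. intros u Hu.
    destruct (Hf _ (In_strings_removelast_cons n b u Hu)) as [Hpos Hle].
    split; [exact Hpos|]. intros X HX. apply Hle, in_cyl_removelast.
    rewrite <- app_assoc in HX. exact HX. }
  rewrite (sumR_refine n (fun a x => f a * m (r ++ x)))
    by (intros; rewrite Hadd, <- !app_assoc; ring).
  rewrite sumR_strings_cons. apply Rplus_le_compat; apply Hb; assumption.
Qed.

Lemma int_le2_split_l mu t s s' c0 c1 : is_measure2 mu ->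
  int_le2 mu t (s ++ [false]) s' c0 -> int_le2 mu t (s ++ [true]) s' c1 ->
  int_le2 mu t s s' (c0 + c1).
Proof.
  intros [_ [_ [Hadd _]]] H0 H1 n g Hg.
  assert (Hb : forall b c, int_le2 mu t (s ++ [b]) s' c ->
    sumR (strings n) (fun u => sumR (strings n)
      (fun u' => g (removelast (b :: u)) u' * mu (s ++ b :: u) (s' ++ u'))) <= c).
  { intros b c Hc.
    erewrite sumR_ext; [apply Hc|].
    - intros u u' Hu Hu'.
      destruct (Hg _ u' (In_strings_removelast_cons n b u Hu) Hu') as [Hpos Hle].
      split; [exact Hpos|]. intros X Y HX HY. apply Hle; [|exact HY]. apply in_cyl_removelast.
      rewrite <- app_assoc in HX. exact HX.
    - intros u _. apply sumR_ext. intros u' _. cbv beta. rewrite <- app_assoc. reflexivity. }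
  rewrite (sumR_refine n (fun a x => sumR (strings n) (fun u' => g a u' * mu (s ++ x) (s' ++ u')))).
  - rewrite sumR_strings_cons. apply Rplus_le_compat; apply Hb; assumption.
  - intros a x. rewrite <- sumR_plus. apply sumR_ext. intros. rewrite Hadd, <- !app_assoc. ring.
Qed.

Lemma is_measure2_swap mu : is_measure2 mu -> is_measure2 (fun a b => mu b a).
Proof. intros [H1 [H2 [H3 H4]]]. repeat split; auto. Qed.

Lemma int_le2_swap mu t s s' c :
  int_le2 (fun a b => mu b a) (fun X Y => t Y X) s' s c -> int_le2 mu t s s' c.
Proof.
  intros H n g Hg. rewrite sumR_swap. apply (H n (fun a b => g b a)).
  intros u u' Hu Hu'. destruct (Hg u' u Hu' Hu) as [Hpos Hle]. split; auto.
Qed.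

Lemma int_le2_split_r mu t s s' c0 c1 : is_measure2 mu ->
  int_le2 mu t s (s' ++ [false]) c0 -> int_le2 mu t s (s' ++ [true]) c1 ->
  int_le2 mu t s s' (c0 + c1).
Proof.
  intros Hm H0 H1. apply int_le2_swap.
  apply int_le2_split_l; [apply is_measure2_swap; exact Hm | |];
    apply int_le2_swap; assumption.
Qed.

Lemma pushjoin_app mu w u : Nat.even (length w) = true ->
  pushjoin mu (w ++ u) = mu (evens w ++ evens u) (odds w ++ odds u).
Proof. intros H. unfold pushjoin. rewrite evens_app, odds_app by exact H. reflexivity. Qed.

Lemma pushjoin_measure mu : is_measure2 mu -> is_measure (pushjoin mu).
Proof.
  intros [H1 [H2 [H3 H4]]]. unfold pushjoin. repeat split; auto.
  intros s. destruct (evens_odds_app s [false]) as [-> ->], (evens_odds_app s [true]) as [-> ->].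
  simpl. destruct (Nat.even (length s)); rewrite !app_nil_r; auto.
Qed.

Lemma int_le2_of_int_le_join mu t s s' c : length s = length s' ->
  int_le (pushjoin mu) t (interleave s s') c -> int_le2 mu (fun X Y => t (join X Y)) s s' c.
Proof.
  intros HL H n g Hg.
  specialize (H (2 * n)%nat (fun u => g (evens u) (odds u))).
  rewrite (sumR_ext _ _ (fun u => (fun a b => g a b * mu (s ++ a) (s' ++ b)) (evens u) (odds u))),
    (sumR_strings_evens_odds n (fun a b => g a b * mu (s ++ a) (s' ++ b))) in H.
  - apply H. intros u Hu. apply length_In_strings in Hu.
    destruct (length_evens_odds_double u n Hu) as [L1 L2].
    destruct (Hg (evens u) (odds u)) as [Hpos Hle]; try (apply In_strings; assumption).
    split; [exact Hpos|]. intros Z HZ. rewrite <- (join_evens_odds_seq Z). apply Hle.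
    + apply in_cyl_evens in HZ. rewrite evens_app, evens_interleave in HZ; auto.
      apply even_length_interleave, HL.
    + apply in_cyl_odds in HZ. rewrite odds_app, odds_interleave in HZ; auto.
      apply even_length_interleave, HL.
  - intros u _. rewrite pushjoin_app by (apply even_length_interleave, HL).
    rewrite evens_interleave, odds_interleave by exact HL. reflexivity.
Qed.

Lemma int_le_join_of_int_le2_even_depth mu t2 r c k f : Nat.even (length r) = true ->
  int_le2 mu t2 (evens r) (odds r) c ->
  (forall u, In u (strings (2 * k)) -> 0 <= f u /\
     forall X, in_cyl (r ++ u) X -> ele (EFin (f u)) (t2 (evens_seq X) (odds_seq X))) ->
  sumR (strings (2 * k)) (fun u => f u * pushjoin mu (r ++ u)) <= c.
Proof.
  intros Hr H Hf.
  set (G a b := f (interleave a b) * mu (evens r ++ a) (odds r ++ b)).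
  rewrite (sumR_ext _ _ (fun u => G (evens u) (odds u))), (sumR_strings_evens_odds k G).
  - apply H. intros a b Ha Hb. apply length_In_strings in Ha, Hb.
    destruct (Hf (interleave a b)) as [Hpos Hle].
    { apply In_strings. rewrite length_interleave; lia. }
    split; [exact Hpos|]. intros X Y HX HY.
    specialize (Hle (join X Y)). rewrite evens_seq_join, odds_seq_join in Hle. apply Hle.
    rewrite <- (interleave_evens_odds r Hr) at 1.
    rewrite <- interleave_app by (apply length_evens_eq_odds, Hr).
    apply in_cyl_interleave; auto. rewrite !length_app, length_evens_eq_odds by exact Hr. lia.
  - intros u Hu. apply length_In_strings in Hu. unfold G.
    rewrite interleave_evens_odds by (rewrite Hu; apply Nat.even_even).
    rewrite pushjoin_app by exact Hr. reflexivity.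
Qed.

Lemma int_le_join_of_int_le2 mu t2 r c : is_measure2 mu -> Nat.even (length r) = true ->
  int_le2 mu t2 (evens r) (odds r) c ->
  int_le (pushjoin mu) (fun Z => t2 (evens_seq Z) (odds_seq Z)) r c.
Proof.
  intros Hm Hr H n f Hf.
  destruct (Nat.Even_or_Odd n) as [[k ->]|[k ->]];
    [apply (int_le_join_of_int_le2_even_depth mu t2 r c); auto|].
  rewrite (sumR_refine _ (fun a x => f a * pushjoin mu (r ++ x)))
    by (intros; rewrite (proj2 (proj2 (pushjoin_measure mu Hm))), <- !app_assoc; ring).
  replace (S (2 * k + 1)) with (2 * S k)%nat by lia.
  apply (int_le_join_of_int_le2_even_depth mu t2 r c); auto. intros u Hu.
  destruct (Hf (removelast u)) as [Hpos Hle].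
  { apply In_strings. rewrite length_removelast, (length_In_strings _ _ Hu). lia. }
  split; [exact Hpos|]. intros X HX. apply Hle, in_cyl_removelast, HX.
Qed.

(* the push-forward of [nu] under [Z |-> (evens_seq Z, odds_seq Z)]: the cylinder
   [s] x [s'] is the union of the join cylinders obtained by padding the shorter of [s], [s'] *)
Definition pushsplit (nu : list bool -> R) (s s' : list bool) : R :=
  if (length s <=? length s')%nat
  then sumR (strings (length s' - length s)) (fun a => nu (interleave (s ++ a) s'))
  else sumR (strings (length s - length s')) (fun b => nu (interleave s (s' ++ b))).

Lemma pushsplit_le nu s s' : (length s <= length s')%nat ->
  pushsplit nu s s' = sumR (strings (length s' - length s)) (fun a => nu (interleave (s ++ a) s')).
Proof. intros H. unfold pushsplit. destruct (Nat.leb_spec (length s) (length s')); auto; lia. Qed.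

Lemma pushsplit_ge nu s s' : (length s' <= length s)%nat ->
  pushsplit nu s s' = sumR (strings (length s - length s')) (fun b => nu (interleave s (s' ++ b))).
Proof.
  intros H. unfold pushsplit. destruct (Nat.leb_spec (length s) (length s')); auto.
  replace (length s) with (length s') by lia. rewrite Nat.sub_diag.
  unfold sumR; simpl. rewrite !app_nil_r. reflexivity.
Qed.

Lemma measure_snoc2 nu w : is_measure nu ->
  nu w = (nu (w ++ [false; false]) + nu (w ++ [false; true])) +
         (nu (w ++ [true; false]) + nu (w ++ [true; true])).
Proof.
  intros [_ [_ Hadd]]. rewrite Hadd, (Hadd (w ++ [false])), (Hadd (w ++ [true])).
  rewrite <- !app_assoc. reflexivity.
Qed.

Lemma pushsplit_snoc_l nu s s' : is_measure nu ->
  pushsplit nu s s' = pushsplit nu (s ++ [false]) s' + pushsplit nu (s ++ [true]) s'.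
Proof.
  intros Hm. destruct (Nat.lt_ge_cases (length s) (length s')).
  - rewrite !pushsplit_le by (rewrite ?length_app; simpl; lia). rewrite !length_app. simpl.
    replace (length s' - length s)%nat with (S (length s' - (length s + 1))) by lia.
    rewrite sumR_strings_cons. f_equal; apply sumR_ext; intros; rewrite <- app_assoc; reflexivity.
  - rewrite !pushsplit_ge by (rewrite ?length_app; simpl; lia). rewrite !length_app. simpl.
    replace (length s + 1 - length s')%nat with (S (length s - length s')) by lia.
    rewrite !sumR_strings_snoc, <- sumR_plus. apply sumR_ext. intros b Hb.
    apply length_In_strings in Hb.
    rewrite !app_assoc, !interleave_app by (rewrite length_app; lia).
    rewrite (measure_snoc2 nu (interleave s (s' ++ b))) by exact Hm. simpl. ring.
Qed.

Lemma pushsplit_snoc_r nu s s' : is_measure nu ->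
  pushsplit nu s s' = pushsplit nu s (s' ++ [false]) + pushsplit nu s (s' ++ [true]).
Proof.
  intros Hm. destruct (Nat.lt_ge_cases (length s') (length s)).
  - rewrite !pushsplit_ge by (rewrite ?length_app; simpl; lia). rewrite !length_app. simpl.
    replace (length s - length s')%nat with (S (length s - (length s' + 1))) by lia.
    rewrite sumR_strings_cons. f_equal; apply sumR_ext; intros; rewrite <- app_assoc; reflexivity.
  - rewrite !pushsplit_le by (rewrite ?length_app; simpl; lia). rewrite !length_app. simpl.
    replace (length s' + 1 - length s)%nat with (S (length s' - length s)) by lia.
    rewrite !sumR_strings_snoc, <- sumR_plus. apply sumR_ext. intros b Hb.
    apply length_In_strings in Hb.
    rewrite !app_assoc, !interleave_app by (rewrite length_app; lia).
    rewrite (measure_snoc2 nu (interleave (s ++ b) s')) by exact Hm. simpl. ring.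
Qed.

Lemma pushsplit_measure nu : is_measure nu -> is_measure2 (pushsplit nu).
Proof.
  intros Hm. repeat split.
  - unfold pushsplit, sumR. simpl. rewrite (proj1 Hm). ring.
  - intros s t. unfold pushsplit. destruct (_ <=? _)%nat;
      apply sumR_nonneg; intros; apply (proj1 (proj2 Hm)).
  - intros; apply pushsplit_snoc_l; exact Hm.
  - intros; apply pushsplit_snoc_r; exact Hm.
Qed.

Lemma int_le2_pushsplit mu nu t : is_measure2 mu -> is_measure nu ->
  (forall r, int_le (pushjoin mu) t r (nu r)) ->
  forall s s', int_le2 mu (fun X Y => t (join X Y)) s s' (pushsplit nu s s').
Proof.
  intros Hmu Hnu H.
  assert (K : forall d s s', (length s' - length s + (length s - length s'))%nat = d ->
     int_le2 mu (fun X Y => t (join X Y)) s s' (pushsplit nu s s')).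
  { intros d. induction d as [d IH] using lt_wf_ind. intros s s' Hd.
    destruct (Nat.lt_total (length s) (length s')) as [Hlt|[Heq|Hgt]].
    - rewrite pushsplit_snoc_l by exact Hnu.
      apply int_le2_split_l; [exact Hmu | |]; eapply IH; try reflexivity;
        rewrite length_app; simpl; lia.
    - rewrite pushsplit_le, Heq, Nat.sub_diag by lia. unfold sumR; simpl.
      rewrite app_nil_r, Rplus_0_r. apply int_le2_of_int_le_join; auto.
    - rewrite pushsplit_snoc_r by exact Hnu.
      apply int_le2_split_r; [exact Hmu | |]; eapply IH; try reflexivity;
        rewrite length_app; simpl; lia. }
  intros s s'. eapply K; reflexivity.
Qed.

Lemma int_le_pushjoin mu nu2 t2 : is_measure2 mu -> is_measure2 nu2 ->
  (forall s s', int_le2 mu t2 s s' (nu2 s s')) ->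
  forall r, int_le (pushjoin mu) (fun Z => t2 (evens_seq Z) (odds_seq Z)) r (pushjoin nu2 r).
Proof.
  intros Hmu Hnu H r.
  destruct (Nat.even (length r)) eqn:Er; [apply int_le_join_of_int_le2; auto|].
  rewrite (proj2 (proj2 (pushjoin_measure nu2 Hnu))).
  apply int_le_split; [apply pushjoin_measure; exact Hmu | |];
    apply int_le_join_of_int_le2; auto;
    rewrite length_app, Nat.add_1_r, Nat.even_succ, <- Nat.negb_even, Er; reflexivity.
Qed.

Ltac computable_step :=
  cbv beta; match goal with
  | |- computable_fun (fun _ => ?k) => apply (computable_const k)
  | |- computable_fun (fun z => z) => apply computable_id
  | |- computable_fun (fun z => (@?f z + @?g z)%nat) => apply (computable_add f g)
  | |- computable_fun (fun z => (@?f z * @?g z)%nat) => apply (computable_mul f g)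
  | |- computable_fun (fun z => (@?f z - @?g z)%nat) => apply (computable_sub f g)
  | |- computable_fun (fun z => (2 ^ @?f z)%nat) => apply (computable_pow2 f)
  | |- computable_fun (fun z => S (@?f z)) => apply (computable_succ f)
  | |- computable_fun (fun z => pred (@?f z)) => apply (computable_pred f)
  | |- computable_fun (fun z => Nat.div2 (@?f z)) => apply (computable_div2 f)
  | |- computable_fun (fun z => Nat.b2n (Nat.odd (@?f z))) => apply (computable_odd f)
  | |- computable_fun (fun z => if (@?f z <=? @?g z)%nat then @?h z else @?k z) =>
      apply (computable_if_le f g h k)
  | |- computable_fun (fun z => if (@?f z <? @?g z)%nat then @?h z else @?k z) =>
      apply (computable_if_lt f g h k)
  | |- computable_fun (fun z => if (@?f z =? @?g z)%nat then @?h z else @?k z) =>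
      apply (computable_if_eq f g h k)
  | |- computable_fun (fun z => if Nat.even (@?f z) then @?g z else @?h z) =>
      apply (computable_if_even f g h)
  | |- computable_fun (fun z => Nat.iter (@?f z) ?g (@?x z)) => apply (computable_iter g f x)
  | |- computable_fun (fun z => npair (@?f z) (@?g z)) => apply (computable_npair f g)
  | |- computable_fun (fun z => unpair1 (@?f z)) => apply (computable_unpair1 f)
  | |- computable_fun (fun z => unpair2 (@?f z)) => apply (computable_unpair2 f)
  | |- computable_fun (fun z => sum_below (@?N z) (fun i => @?E i z)) =>
      apply (computable_sum_below E N)
  | |- computable_fun (fun z => prod_below (@?N z) (fun i => @?E i z)) =>
      apply (computable_prod_below E N)
  | |- computable_fun (fun z => code_bit (@?f z) (@?g z)) => apply (computable_code_bit f g)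
  | |- computable_fun (fun z => code_length (@?f z)) => apply (computable_code_length f)
  | |- computable_fun (fun z => ?g (@?f z)) => apply (computable_comp g f); [assumption|]
  | |- computable_fun ?f =>
      lazymatch f with (fun _ => _) => fail | _ => change (computable_fun (fun z => f z)) end
  end.

Ltac solve_computable := repeat computable_step.

Lemma is_sup_seq_cofinal (a b : nat -> R) e : is_sup_seq a e ->
  (forall n, exists m, b n = a m) -> (forall m, exists n, a m <= b n) -> is_sup_seq b e.
Proof.
  intros H Hb Ha. destruct e as [r|]; simpl in *.
  - destruct H as [Hub Hlub]. split.
    + intros x [n ->]. destruct (Hb n) as [m ->]. apply Hub. eauto.
    + intros M HM. apply Hlub. intros x [m ->]. destruct (Ha m) as [n Hn].
      eapply Rle_trans; [exact Hn | apply HM; eauto].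
  - intros M. destruct (H M) as [m Hm]. destruct (Ha m) as [n Hn]. exists n. lra.
Qed.

Section SplitTransfer.
Local Open Scope nat_scope.

(* the code of the bits at positions [o], [o + 2], ..., [o + 2 (h - 1)] of the string coded by [c] *)
Definition code_alternate (h o c : nat) : nat :=
  sum_below h (fun i => 2 ^ i * (1 + code_bit (2 * i + o) c)).

Lemma code_alternate_code l h o : (forall i, i < h -> 2 * i + o < length l) ->
  code_alternate h o (code_str l) =
  sum_below h (fun i => 2 ^ i * (1 + Nat.b2n (nth (2 * i + o) l false))).
Proof. intros H. apply sum_below_ext. intros i Hi. rewrite code_bit_code; auto. Qed.

Lemma code_alternate_evens r :
  code_alternate (Nat.div2 (S (length r))) 0 (code_str r) = code_str (evens r).
Proof.
  rewrite code_alternate_code, (code_str_sum (evens r)), (proj1 (length_evens_odds r)).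
  - apply sum_below_ext. intros i _. rewrite nth_evens, Nat.add_0_r. reflexivity.
  - intros i Hi. apply double_lt_of_lt_div2_succ in Hi. lia.
Qed.

Lemma code_alternate_odds r :
  code_alternate (Nat.div2 (length r)) 1 (code_str r) = code_str (odds r).
Proof.
  rewrite code_alternate_code, (code_str_sum (odds r)), (proj2 (length_evens_odds r)).
  - apply sum_below_ext. intros i _. rewrite nth_odds, Nat.add_1_r. reflexivity.
  - intros i Hi. apply succ_double_lt_of_lt_div2 in Hi. lia.
Qed.

Lemma code_alternate_prefix Z m o : o <= 1 ->
  code_alternate (Nat.div2 m) o (code_str (prefix Z m)) =
  code_str (prefix (fun i => Z (2 * i + o)) (Nat.div2 m)).
Proof.
  intros Ho. rewrite code_alternate_code, code_prefix.
  - apply sum_below_ext. intros i Hi. rewrite nth_prefix; [reflexivity|].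
    apply succ_double_lt_of_lt_div2 in Hi. lia.
  - intros i Hi. rewrite length_prefix. apply succ_double_lt_of_lt_div2 in Hi. lia.
Qed.

Definition code_halves (c : nat) : nat :=
  npair (code_alternate (Nat.div2 (code_length c)) 0 c)
        (code_alternate (Nat.div2 (code_length c)) 1 c).

Lemma code_halves_prefix Z m : code_halves (code_str (prefix Z m)) =
  npair (code_str (prefix (evens_seq Z) (Nat.div2 m)))
        (code_str (prefix (odds_seq Z) (Nat.div2 m))).
Proof.
  unfold code_halves. rewrite code_length_code, length_prefix, !code_alternate_prefix by lia.
  f_equal; do 2 f_equal; apply functional_extensionality; intros i;
    unfold evens_seq, odds_seq; f_equal; lia.
Qed.

Definition code_split_query (z : nat) : nat :=
  npair (code_alternate (Nat.div2 (S (code_length (unpair1 z)))) 0 (unpair1 z))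
        (npair (code_alternate (Nat.div2 (code_length (unpair1 z))) 1 (unpair1 z)) (unpair2 z)).

Lemma code_split_query_npair r k : code_split_query (npair (code_str r) k) =
  npair (code_str (evens r)) (npair (code_str (odds r)) k).
Proof.
  unfold code_split_query.
  rewrite unpair1_npair, unpair2_npair, code_length_code, code_alternate_evens, code_alternate_odds.
  reflexivity.
Qed.

Lemma lsc_split t2 : lsc2 t2 -> lsc (fun Z => t2 (evens_seq Z) (odds_seq Z)).
Proof.
  intros [Hpos [p [m [d [Hp [Hm [Hd Hsup]]]]]]]. split; [intros; apply Hpos|].
  assert (HG : computable_fun code_halves)
    by (unfold code_halves, code_alternate; solve_computable).
  exists (fun c => p (code_halves c)), (fun c => m (code_halves c)), (fun c => d (code_halves c)).
  repeat split; try (apply computable_comp; assumption).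
  intros Z. apply (is_sup_seq_cofinal _ _ _ (Hsup (evens_seq Z) (odds_seq Z))).
  - intros n. exists (Nat.div2 n). unfold Qof. rewrite code_halves_prefix. reflexivity.
  - intros n. exists (2 * n)%nat. unfold Qof.
    rewrite code_halves_prefix, Nat.div2_double. apply Rle_refl.
Qed.

Lemma computable_measure_pushjoin nu2 :
  computable_measure2 nu2 -> computable_measure (pushjoin nu2).
Proof.
  intros [Hnu [p [m [d [Hp [Hm [Hd Happrox]]]]]]]. split; [apply pushjoin_measure, Hnu|].
  assert (HG : computable_fun code_split_query)
    by (unfold code_split_query, code_alternate; solve_computable).
  exists (fun z => p (code_split_query z)), (fun z => m (code_split_query z)),
    (fun z => d (code_split_query z)).
  repeat split; try (apply computable_comp; assumption).
  intros r k. unfold Qof. rewrite code_split_query_npair. apply Happrox.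
Qed.

End SplitTransfer.

(* the code of the string of length [M] whose bits at even positions [2 u] are [fa u]
   and at odd positions [2 u + 1] are [fb u] *)
Definition code_interleave (fa fb : nat -> nat) (M : nat) : nat :=
  sum_below M (fun q => 2 ^ q * (1 + if Nat.even q then fa (Nat.div2 q) else fb (Nat.div2 q)))%nat.

Lemma code_interleave_prefix X Y n M : (M <= 2 * n)%nat ->
  code_interleave (fun u => code_bit u (code_str (prefix X n)))
    (fun u => code_bit u (code_str (prefix Y n))) M =
  code_str (prefix (join X Y) M).
Proof.
  intros HM. unfold code_interleave. rewrite (code_prefix (join X Y) M).
  apply sum_below_ext. intros q Hq.
  assert (Hd : (Nat.div2 q < n)%nat) by (pose proof (Nat.div2_odd q); lia).
  unfold join. destruct (Nat.even q);
    rewrite code_bit_code, nth_prefix by (rewrite ?length_prefix; exact Hd); reflexivity.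
Qed.

Definition code_join_prefix (k z : nat) : nat :=
  code_interleave (fun u => code_bit u (unpair1 z)) (fun u => code_bit u (unpair2 z))
    (2 * code_length (unpair1 z) - k).

Lemma code_join_prefix_npair k X Y n :
  code_join_prefix k (npair (code_str (prefix X n)) (code_str (prefix Y n))) =
  code_str (prefix (join X Y) (2 * n - k)).
Proof.
  unfold code_join_prefix. rewrite unpair1_npair, unpair2_npair, code_length_code, length_prefix.
  apply code_interleave_prefix. lia.
Qed.

Lemma Qof_le_cross p m d x y :
  (p y * S (d x) + m x * S (d y) <= p x * S (d y) + m y * S (d x))%nat ->
  Qof p m d y <= Qof p m d x.
Proof.
  intros H. apply le_INR in H. rewrite !plus_INR, !mult_INR in H.
  assert (Hx : 0 < INR (S (d x))) by (apply lt_0_INR; lia).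
  assert (Hy : 0 < INR (S (d y))) by (apply lt_0_INR; lia).
  unfold Qof, Rdiv. apply Rmult_le_reg_r with (INR (S (d x)) * INR (S (d y))); [nra|].
  replace ((INR (p y) - INR (m y)) * / INR (S (d y)) * (INR (S (d x)) * INR (S (d y))))
    with ((INR (p y) - INR (m y)) * INR (S (d x))) by (field; lra).
  replace ((INR (p x) - INR (m x)) * / INR (S (d x)) * (INR (S (d x)) * INR (S (d y))))
    with ((INR (p x) - INR (m x)) * INR (S (d y))) by (field; lra).
  nra.
Qed.

Definition argmax_Qof (p m d : nat -> nat) (x y : nat) : nat :=
  if (p y * S (d x) + m x * S (d y) <=? p x * S (d y) + m y * S (d x))%nat then x else y.

Lemma Qof_argmax p m d x y :
  (argmax_Qof p m d x y = x \/ argmax_Qof p m d x y = y) /\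
  Qof p m d x <= Qof p m d (argmax_Qof p m d x y) /\
  Qof p m d y <= Qof p m d (argmax_Qof p m d x y).
Proof.
  unfold argmax_Qof.
  destruct (Nat.leb_spec (p y * S (d x) + m x * S (d y)) (p x * S (d y) + m y * S (d x))).
  - split; [auto|]. split; [apply Rle_refl | apply Qof_le_cross; exact H].
  - split; [auto|]. split; [apply Qof_le_cross; lia | apply Rle_refl].
Qed.

Lemma lsc_join t : lsc t -> lsc2 (fun X Y => t (join X Y)).
Proof.
  intros [Hpos [p [m [d [Hp [Hm [Hd Hsup]]]]]]]. split; [intros; apply Hpos|].
  set (best z := argmax_Qof p m d (code_join_prefix 0 z) (code_join_prefix 1 z)).
  assert (Hbest : computable_fun best)
    by (unfold best, argmax_Qof, code_join_prefix, code_interleave; solve_computable).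
  exists (fun z => p (best z)), (fun z => m (best z)), (fun z => d (best z)).
  repeat split; try (apply computable_comp; assumption).
  intros X Y. apply (is_sup_seq_cofinal _ _ _ (Hsup (join X Y))).
  - intros n. set (z := npair (code_str (prefix X n)) (code_str (prefix Y n))).
    destruct (Qof_argmax p m d (code_join_prefix 0 z) (code_join_prefix 1 z)) as [[E|E] _];
      unfold Qof, best; rewrite E; unfold z; rewrite code_join_prefix_npair; eauto.
  - intros k. exists (Nat.div2 (S k)).
    set (z := npair (code_str (prefix X (Nat.div2 (S k)))) (code_str (prefix Y (Nat.div2 (S k))))).
    destruct (Qof_argmax p m d (code_join_prefix 0 z) (code_join_prefix 1 z)) as [_ [H0 H1]].
    assert (Hk : code_str (prefix (join X Y) k) = code_join_prefix 0 z \/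
                 code_str (prefix (join X Y) k) = code_join_prefix 1 z).
    { unfold z. rewrite !code_join_prefix_npair.
      pose proof (Nat.div2_odd (S k)) as Ek. destruct (Nat.odd (S k)); cbn [Nat.b2n] in Ek;
        [left | right]; do 3 f_equal; lia. }
    destruct Hk as [-> | ->]; assumption.
Qed.

Lemma sumR_minus {A} l (f g : A -> R) : sumR l (fun a => f a - g a) = sumR l f - sumR l g.
Proof. induction l; unfold sumR in *; simpl; [ring|]. rewrite IHl. ring. Qed.

Lemma sumR_mult_r {A} l c (f : A -> R) : sumR l (fun a => f a * c) = sumR l f * c.
Proof. induction l; unfold sumR in *; simpl; [ring|]. rewrite IHl. ring. Qed.

Lemma sumR_abs {A} l (f : A -> R) : Rabs (sumR l f) <= sumR l (fun a => Rabs (f a)).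
Proof.
  induction l; unfold sumR in *; simpl; [rewrite Rabs_R0; lra|].
  eapply Rle_trans; [apply Rabs_triang | lra].
Qed.

Lemma sumR_const {A} l c : sumR l (fun _ : A => c) = INR (length l) * c.
Proof.
  induction l; unfold sumR in *; [simpl; ring|].
  cbn [fold_right length]. rewrite IHl, S_INR. ring.
Qed.

Lemma INR_sum_below n f : INR (sum_below n f) = sumR (seq 0 n) (fun i => INR (f i)).
Proof.
  induction n; [reflexivity|]. rewrite seq_S, sumR_app. simpl sum_below.
  rewrite plus_INR, IHn. unfold sumR at 3. simpl. ring.
Qed.

Lemma prod_below_pos N e : (forall t, (0 < e t)%nat) -> (0 < prod_below N e)%nat.
Proof. intros H. induction N; simpl; auto. specialize (H N). nia. Qed.

Lemma prod_below_except N e t : (t < N)%nat ->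
  (prod_below N (fun t' => if (t' =? t)%nat then 1%nat else e t') * e t)%nat = prod_below N e.
Proof.
  induction N; intros Ht; [lia|]. simpl.
  destruct (Nat.eqb_spec N t).
  - subst. rewrite (prod_below_ext _ _ e); [lia|].
    intros i Hi. destruct (Nat.eqb_spec i t); [lia | reflexivity].
  - rewrite <- IHN by lia. lia.
Qed.

(* numerator of [\sum_(t < N) num t / den t] over the common denominator [\prod_(t < N) den t] *)
Definition sum_fractions_num (N : nat) (num den : nat -> nat) : nat :=
  sum_below N (fun t => num t * prod_below N (fun t' => if (t' =? t)%nat then 1 else den t'))%nat.

Lemma sum_fractions_num_spec N num den : (forall t, (0 < den t)%nat) ->
  INR (sum_fractions_num N num den) / INR (prod_below N den) =
  sumR (seq 0 N) (fun t => INR (num t) / INR (den t)).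
Proof.
  intros H. unfold sum_fractions_num, Rdiv.
  rewrite INR_sum_below, <- sumR_mult_r. apply sumR_ext. intros t Ht. apply in_seq in Ht.
  rewrite <- (prod_below_except N den t) by lia. rewrite !mult_INR.
  assert (0 < INR (den t)) by (apply lt_0_INR; auto).
  assert (0 < INR (prod_below N (fun t' => if (t' =? t)%nat then 1%nat else den t'))).
  { apply lt_0_INR, prod_below_pos. intros t'. destruct (t' =? t)%nat; auto. }
  field. lra.
Qed.

Lemma Qof_sum_fractions (p m d : nat -> nat) z N num1 num2 den :
  (forall t, (0 < den t)%nat) -> p z = sum_fractions_num N num1 den ->
  m z = sum_fractions_num N num2 den -> d z = pred (prod_below N den) ->
  Qof p m d z = sumR (seq 0 N) (fun t => (INR (num1 t) - INR (num2 t)) / INR (den t)).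
Proof.
  intros H Hp Hm Hd. unfold Qof. rewrite Hp, Hm, Hd, Nat.succ_pred_pos by (apply prod_below_pos; auto).
  unfold Rdiv at 1. rewrite Rmult_minus_distr_r.
  fold (Rdiv (INR (sum_fractions_num N num1 den)) (INR (prod_below N den))).
  fold (Rdiv (INR (sum_fractions_num N num2 den)) (INR (prod_below N den))).
  rewrite !sum_fractions_num_spec, <- sumR_minus by exact H.
  apply sumR_ext. intros. unfold Rdiv. ring.
Qed.

Section PushSplitTransfer.
Local Open Scope nat_scope.

(* the [n] low-order binary digits of [t], most significant first *)
Fixpoint nat_string (n t : nat) : list bool :=
  match n with O => [] | S n' => nat_string n' (Nat.div2 t) ++ [Nat.odd t] end.

Lemma length_nat_string n t : length (nat_string n t) = n.
Proof. revert t; induction n; intros t; simpl; auto. rewrite length_app, IHn. simpl. lia. Qed.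

Lemma strings_nat_string_aux n a k :
  flat_map (fun s => [s ++ [false]; s ++ [true]]) (map (nat_string n) (seq a k)) =
  map (nat_string (S n)) (seq (2 * a) (2 * k)).
Proof.
  revert a. induction k; intros a; [reflexivity|].
  replace (2 * S k) with (S (S (2 * k))) by lia.
  cbn [seq map flat_map]. rewrite IHk. replace (2 * S a) with (S (S (2 * a))) by lia.
  cbn [nat_string]. rewrite Nat.div2_double, Nat.div2_succ_double, Nat.odd_even.
  replace (Nat.odd (S (2 * a))) with true by (rewrite <- Nat.add_1_r, Nat.odd_odd; reflexivity).
  reflexivity.
Qed.

Lemma strings_nat_string n : strings n = map (nat_string n) (seq 0 (2 ^ n)).
Proof.
  induction n; [reflexivity|]. cbn [strings]. rewrite IHn, strings_nat_string_aux.
  simpl. repeat f_equal; lia.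
Qed.

Definition nat_bit (k t : nat) : nat := Nat.b2n (Nat.odd (Nat.iter k Nat.div2 t)).

Lemma nat_bit_nat_string n t u : u < n ->
  nat_bit (n - 1 - u) t = Nat.b2n (nth u (nat_string n t) false).
Proof.
  unfold nat_bit. revert t u. induction n; intros t u Hu; [lia|]. cbn [nat_string].
  destruct (Nat.lt_ge_cases u n).
  - rewrite app_nth1 by (rewrite length_nat_string; exact H). rewrite <- IHn by exact H.
    replace (S n - 1 - u) with (S (n - 1 - u)) by lia. rewrite Nat.iter_succ_r. reflexivity.
  - replace u with n by lia. rewrite app_nth2, length_nat_string, Nat.sub_diag by (rewrite length_nat_string; lia).
    replace (S n - 1 - n) with 0 by lia. reflexivity.
Qed.

Definition code_app_bit (c j t u : nat) : nat :=
  if u <? code_length c then code_bit u c else nat_bit (j - 1 - (u - code_length c)) t.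

Lemma code_app_bit_code s j t u : u < length s + j ->
  code_app_bit (code_str s) j t u = Nat.b2n (nth u (s ++ nat_string j t) false).
Proof.
  intros H. unfold code_app_bit. rewrite code_length_code.
  destruct (Nat.ltb_spec u (length s)).
  - rewrite code_bit_code, app_nth1; auto.
  - rewrite app_nth2, nat_bit_nat_string by lia. reflexivity.
Qed.

Definition padded_join (s s' : list bool) (t : nat) : list bool :=
  interleave (s ++ nat_string (length s' - length s) t)
             (s' ++ nat_string (length s - length s') t).

Definition length_gap (s s' : list bool) : nat := length s' - length s + (length s - length s').

Lemma pushsplit_padded_join nu s s' :
  pushsplit nu s s' = sumR (seq 0 (2 ^ length_gap s s')) (fun t => nu (padded_join s s' t)).
Proof.
  unfold padded_join, length_gap. destruct (Nat.le_ge_cases (length s) (length s')).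
  - rewrite pushsplit_le, strings_nat_string, sumR_map by exact H.
    replace (length s - length s') with 0 by lia. rewrite Nat.add_0_r.
    apply sumR_ext. intros. rewrite app_nil_r. reflexivity.
  - rewrite pushsplit_ge, strings_nat_string, sumR_map by exact H.
    replace (length s' - length s) with 0 by lia.
    apply sumR_ext. intros. rewrite app_nil_r. reflexivity.
Qed.

Definition code_gap_l (z : nat) : nat := code_length (unpair1 (unpair2 z)) - code_length (unpair1 z).
Definition code_gap_r (z : nat) : nat := code_length (unpair1 z) - code_length (unpair1 (unpair2 z)).

Definition code_padded_join (z t : nat) : nat :=
  code_interleave (code_app_bit (unpair1 z) (code_gap_l z) t)
                  (code_app_bit (unpair1 (unpair2 z)) (code_gap_r z) t)
                  (2 * (code_length (unpair1 z) + code_gap_l z)).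

Lemma code_padded_join_npair s s' k t :
  code_padded_join (npair (code_str s) (npair (code_str s') k)) t = code_str (padded_join s s' t).
Proof.
  unfold code_padded_join, code_gap_l, code_gap_r, padded_join.
  rewrite !unpair1_npair, !unpair2_npair, !unpair1_npair, !code_length_code.
  set (A := s ++ nat_string (length s' - length s) t).
  set (B := s' ++ nat_string (length s - length s') t).
  assert (HAB : length A = length B)
    by (unfold A, B; rewrite !length_app, !length_nat_string; lia).
  assert (HA : length A = length s + (length s' - length s))
    by (unfold A; rewrite length_app, length_nat_string; reflexivity).
  unfold code_interleave. rewrite (code_str_sum (interleave A B)), length_interleave, <- HA by exact HAB.
  apply sum_below_ext. intros q Hq. rewrite nth_interleave by exact HAB.
  assert (Hu : Nat.div2 q < length A) by (pose proof (Nat.div2_odd q); lia).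
  destruct (Nat.even q); rewrite code_app_bit_code; try reflexivity; lia.
Qed.

(* the [t]-th summand of [pushsplit nu s s'] is queried at precision [k + gap], so that the
   [2 ^ gap] errors add up to at most [2 ^ -k] *)
Definition split_query (z t : nat) : nat :=
  npair (code_padded_join z t) (unpair2 (unpair2 z) + (code_gap_l z + code_gap_r z)).

Definition split_numerator (p d : nat -> nat) (z : nat) : nat :=
  sum_fractions_num (2 ^ (code_gap_l z + code_gap_r z))
    (fun t => p (split_query z t)) (fun t => S (d (split_query z t))).

Definition split_denominator (d : nat -> nat) (z : nat) : nat :=
  pred (prod_below (2 ^ (code_gap_l z + code_gap_r z)) (fun t => S (d (split_query z t)))).

Lemma computable_split_numerator p d : computable_fun p -> computable_fun d ->
  computable_fun (split_numerator p d).
Proof.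
  intros. unfold split_numerator, sum_fractions_num, split_query, code_padded_join,
    code_interleave, code_app_bit, nat_bit, code_gap_l, code_gap_r.
  solve_computable.
Qed.

Lemma computable_split_denominator d : computable_fun d -> computable_fun (split_denominator d).
Proof.
  intros. unfold split_denominator, split_query, code_padded_join,
    code_interleave, code_app_bit, nat_bit, code_gap_l, code_gap_r.
  solve_computable.
Qed.

End PushSplitTransfer.

Lemma computable_measure_pushsplit nu :
  computable_measure nu -> computable_measure2 (pushsplit nu).
Proof.
  intros [Hnu [p [m [d [Hp [Hm [Hd Happrox]]]]]]]. split; [apply pushsplit_measure, Hnu|].
  exists (split_numerator p d), (split_numerator m d), (split_denominator d).
  repeat split; auto using computable_split_numerator, computable_split_denominator.
  intros s s' k. set (z := npair (code_str s) (npair (code_str s') k)).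
  assert (Hgap : (code_gap_l z + code_gap_r z)%nat = length_gap s s').
  { unfold z, code_gap_l, code_gap_r, length_gap.
    rewrite !unpair2_npair, !unpair1_npair, !code_length_code. reflexivity. }
  assert (Hquery : forall t, split_query z t = npair (code_str (padded_join s s' t)) (k + length_gap s s')).
  { intros t. unfold split_query. rewrite Hgap. unfold z.
    rewrite code_padded_join_npair, !unpair2_npair. reflexivity. }
  rewrite (Qof_sum_fractions _ _ _ z (2 ^ length_gap s s') (fun t => p (split_query z t))
    (fun t => m (split_query z t)) (fun t => S (d (split_query z t))))
    by (try (intros; lia); unfold split_numerator, split_denominator; rewrite Hgap; reflexivity).
  rewrite pushsplit_padded_join, <- sumR_minus.
  eapply Rle_trans; [apply sumR_abs|].
  eapply Rle_trans; [apply (sumR_le _ _ (fun _ => / 2 ^ (k + length_gap s s')))|].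
  - intros t _. rewrite Hquery. apply Happrox.
  - rewrite sumR_const, length_seq, pow_INR, pow_add. replace (INR 2) with 2 by reflexivity.
    assert (0 < 2 ^ k) by (apply pow_lt; lra).
    assert (0 < 2 ^ length_gap s s') by (apply pow_lt; lra).
    right. field. lra.
Qed.

Theorem mainTheorem7 (mu : list bool -> list bool -> R) :
  computable_measure2 mu ->
  forall X Y : cantor, comp_random2 mu X Y <-> comp_random (pushjoin mu) (join X Y).
Proof.
  intros [Hmu _] X Y. split.
  - intros Hr t nu Ht Hnu Hint.
    exact (Hr _ _ (lsc_join t Ht) (computable_measure_pushsplit nu Hnu)
              (int_le2_pushsplit mu nu t Hmu (proj1 Hnu) Hint)).
  - intros Hr t2 nu2 Ht2 Hnu2 Hint.
    pose proof (Hr _ _ (lsc_split t2 Ht2) (computable_measure_pushjoin nu2 Hnu2)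
                  (int_le_pushjoin mu nu2 t2 Hmu (proj1 Hnu2) Hint)) as Hfin.
    cbv beta in Hfin. rewrite evens_seq_join, odds_seq_join in Hfin. exact Hfin.
Qed.
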